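(* Let $s\ge r$ be positive integers and let $Q$ be drawn from the uniform (Haar) measure on $V_r(\mathbb{R}^s)$. Then for any sets $S,U\subseteq[s]$ and $T,V\subseteq[r]$ with $|S|=|T|=i$ and $|U|=|V|=\ell$, \[ \mathbb{E}_Q\big[[Q]_{S,T}[Q]_{U,V}\big]=\frac{1}{\binom{s}{i}}\,\mathbf{1}[S=U]\,\mathbf{1}[T=V]. \]
   Context: $V_r(\mathbb{R}^s)$ (the Stiefel manifold) is the set of real $s\times r$ matrices with orthonormal columns, with its uniform (Haar) probability measure, invariant under left multiplication by $s\times s$ orthogonal matrices and right multiplication by $r\times r$ orthogonal matrices. For a matrix $C$ and index sets $S,T$ with $|S|=|T|$, $[C]_{S,T}=\det(\{C_{ij}\}_{i\in S,j\in T})$ is the $(S,T)$-minor. $[N]=\{1,\dots,N\}$. *)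

From HB Require Import structures.
From mathcomp Require Import all_boot all_order all_algebra.
From mathcomp Require Import all_classical all_reals all_analysis.
Set Implicit Arguments. Unset Strict Implicit. Unset Printing Implicit Defensive.
Import Order.TTheory GRing.Theory Num.Theory.
Local Open Scope classical_set_scope.
Local Open Scope ring_scope.

(* The (S,T)-minor [C]_{S,T}: determinant of the submatrix with rows in S and
   columns in T, both taken in increasing order (enum of an ordinal set is
   increasing). Defined to be 0 when |S| <> |T| (never used in that case). *)
Definition minor (R : comNzRingType) (m n : nat) (C : 'M[R]_(m, n))
  (S : {set 'I_m}) (T : {set 'I_n}) : R :=
  match #|T| =P #|S| with
  | ReflectT h =>
      \det (\matrix_(a < #|S|, b < #|S|)
              C (enum_val a) (enum_val (cast_ord (esym h) b)))
  | ReflectF _ => 0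
  end.

Definition stiefel (R : realType) (s r : nat) : set 'M[R]_(s, r) :=
  [set Q | Q^T *m Q = 1%:M].

Definition orthogonal_mx (R : realType) (n : nat) (O : 'M[R]_n) : Prop :=
  O^T *m O = 1%:M.

(* The Borel sigma-algebra on s x r real matrices: generated by the entry maps. *)
Definition mx_measurable (R : realType) (s r : nat) (A : set 'M[R]_(s, r)) : Prop :=
  <<s [set B | exists (i : 'I_s) (j : 'I_r) (C : set R),
         measurable C /\ B = (fun M : 'M[R]_(s, r) => M i j) @^-1` C] >> A.

(* Q : Omega -> matrices is a random matrix, distributed according to the Haar
   (uniform) probability measure on V_r(R^s): it takes values in the Stiefel
   manifold, is measurable, and its law is invariant under left multiplication by
   s x s orthogonal matrices and right multiplication by r x r orthogonal ones. *)
Definition haar_stiefel (R : realType) (d : measure_display) (Omega : measurableType d)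
  (P : probability Omega R) (s r : nat) (Q : Omega -> 'M[R]_(s, r)) : Prop :=
  [/\ forall w, stiefel (Q w),
      forall A, mx_measurable A -> measurable (Q @^-1` A)
    & forall (O1 : 'M[R]_s) (O2 : 'M[R]_r), orthogonal_mx O1 -> orthogonal_mx O2 ->
        forall A, mx_measurable A ->
          P ((fun w => O1 *m Q w *m O2) @^-1` A) = P (Q @^-1` A)].

From HB Require Import structures.
From mathcomp Require Import all_boot all_order all_algebra all_fingroup.
From mathcomp Require Import primitive_action alt.
From mathcomp Require Import all_classical all_reals all_analysis measurable_realfun.
From mathcomp Require Import lra.
Set Implicit Arguments. Unset Strict Implicit. Unset Printing Implicit Defensive.
Import Order.TTheory GRing.Theory Num.Theory.
Local Open Scope ring_scope.

(* Flipping the sign of a row (or column) of Q preserves its law and changes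
   the sign of [Q]_{S,T} [Q]_{U,V} as soon as that row lies in exactly one of S
   and U (that column in exactly one of T and V); hence the expectation vanishes
   unless S = U and T = V.  In that case, permuting the rows of Q shows that
   E[det(Q_{f,T})^2] takes the same value c for every injective row selection
   f : [i] -> [s], while non-injective selections give 0.  By Cauchy-Binet,
   the sum of det(Q_{f,T})^2 over all maps f : [i] -> [s] is
   i! det(Q_T^T Q_T) = i!, so c s!/(s-i)! = i!, i.e. c = 1/binom(s,i). *)

Section CauchyBinet.
Variable R : comNzRingType.

Lemma det_mulmx_ffun n m (B : 'M[R]_(n, m)) (C : 'M[R]_(m, n)) :
  \det (B *m C) =
  \sum_(f : {ffun 'I_n -> 'I_m}) (\prod_a B a (f a)) * \det (rowsub f C).
Proof.
rewrite /determinant.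
under eq_bigr => σ _ do (under eq_bigr => a _ do rewrite mxE;
  rewrite bigA_distr_bigA /= big_distrr).
rewrite exchange_big; apply: eq_bigr => f _; rewrite big_distrr.
apply: eq_bigr => σ _ /=; rewrite big_split /= mulrCA; congr (_ * (_ * _)).
by apply: eq_bigr => a _; rewrite mxE.
Qed.

Lemma det_rowsub_comp_perm n m (f : 'I_n -> 'I_m) (τ : 'S_n) (C : 'M[R]_(m, n)) :
  \det (rowsub (f \o τ) C) = (-1) ^+ τ * \det (rowsub f C).
Proof.
have -> : rowsub (f \o τ) C = perm_mx τ *m rowsub f C.
  by rewrite -row_permE; apply/matrixP => a b; rewrite !mxE.
by rewrite det_mulmx det_perm.
Qed.

(* Averaging [det_mulmx_ffun] over the reindexings [f \o τ] turns the product
   of entries of [B] into a minor of [B]. *)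
Lemma cauchy_binet_ffun n m (B : 'M[R]_(n, m)) (C : 'M[R]_(m, n)) :
  \det (B *m C) *+ n`! =
  \sum_(f : {ffun 'I_n -> 'I_m}) \det (colsub f B) * \det (rowsub f C).
Proof.
have detBC_perm (τ : 'S_n) : \det (B *m C) = \sum_(f : {ffun 'I_n -> 'I_m})
    (-1) ^+ τ * (\prod_a B a (f (τ a))) * \det (rowsub f C).
  pose fτ (f : {ffun 'I_n -> 'I_m}) := [ffun a => f (τ a)].
  have fτ_inj : injective fτ.
    move=> f g /ffunP efg; apply/ffunP => x.
    by have := efg (τ^-1 x)%g; rewrite !ffunE permKV.
  rewrite det_mulmx_ffun (reindex_inj fτ_inj); apply: eq_bigr => f _.
  have -> : rowsub (fτ f) C = rowsub (f \o τ) C.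
    by apply/matrixP => a b; rewrite !mxE ffunE.
  rewrite det_rowsub_comp_perm mulrCA mulrA; congr (_ * _ * _).
  by apply: eq_bigr => a _; rewrite ffunE.
rewrite -card_Sn -sumr_const.
under eq_bigr => τ _ do rewrite (detBC_perm τ).
rewrite exchange_big; apply: eq_bigr => f _; rewrite -big_distrl /=.
congr (_ * _); apply: eq_bigr => τ _; congr (_ * _).
by apply: eq_bigr => a _; rewrite mxE.
Qed.

Lemma sum_det_rowsub_sqr n m (A : 'M[R]_(m, n)) :
  \sum_(f : {ffun 'I_n -> 'I_m}) \det (rowsub f A) ^+ 2 = \det (A^T *m A) *+ n`!.
Proof.
rewrite cauchy_binet_ffun; apply: eq_bigr => f _.
by rewrite -[colsub f A^T]trmx_mxsub det_tr expr2.
Qed.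

Lemma det_rowsub_noninj n m (f : 'I_n -> 'I_m) (A : 'M[R]_(m, n)) :
  ~~ injectiveb f -> \det (rowsub f A) = 0.
Proof.
move/injectivePn => [a1 [a2 neq_a eq_f]]; apply: (determinant_alternate neq_a).
by move=> b; rewrite !mxE eq_f.
Qed.

End CauchyBinet.

Lemma perm_extend_inj (T : finType) n (φ ψ : 'I_n -> T) :
  injective φ -> injective ψ -> exists σ : {perm T}, forall a, σ (ψ a) = φ a.
Proof.
move=> φ_inj ψ_inj.
have le_nT : (n <= #|T|)%N by rewrite -(card_ord n); exact: leq_card φ_inj.
have dtuple_inj (χ : 'I_n -> T) :
    injective χ -> [tuple χ a | a < n] \in n.-dtuple([set: T]).
  move=> χ_inj; apply/dtuple_onP; split=> [a b|a]; last by rewrite inE.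
  by rewrite !tnth_mktuple => /χ_inj.
have Sym_ntrans := ntransitive_weak le_nT (Sym_trans T).
have [σ _ eqσ] := atransP2 Sym_ntrans (dtuple_inj _ ψ_inj) (dtuple_inj _ φ_inj).
exists σ => a; have := congr1 (fun t => tnth t a) eqσ.
by rewrite /= !tnth_map !tnth_ord_tuple.
Qed.

Definition enum_cast k (A : {set 'I_k}) i (hA : #|A| = i) (a : 'I_i) : 'I_k :=
  enum_val (cast_ord (esym hA) a).

Lemma enum_cast_inj k (A : {set 'I_k}) i (hA : #|A| = i) : injective (enum_cast hA).
Proof. exact: inj_comp enum_val_inj (@cast_ord_inj _ _ _). Qed.
Arguments enum_cast_inj {k A i}.

Section Minor.
Variable R : comNzRingType.

Lemma minorE m n (M : 'M[R]_(m, n)) (S : {set 'I_m}) (T : {set 'I_n}) i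
    (hS : #|S| = i) (hT : #|T| = i) :
  minor M S T = \det (mxsub (enum_cast hS) (enum_cast hT) M).
Proof.
rewrite /minor; case: eqP => [hTS|]; last by rewrite hS hT.
subst i; congr (\det _); apply/matrixP => a b; rewrite !mxE /enum_cast cast_ord_id.
by congr (M _ (enum_val _)); apply: val_inj.
Qed.

Lemma minor_card_neq m n (M : 'M[R]_(m, n)) (S : {set 'I_m}) (T : {set 'I_n}) :
  #|S| != #|T| -> minor M S T = 0.
Proof.
by move=> neqST; rewrite /minor; case: eqP => // hTS; rewrite hTS eqxx in neqST.
Qed.

Lemma minor_tr m n (M : 'M[R]_(m, n)) (S : {set 'I_m}) (T : {set 'I_n}) :
  minor M^T T S = minor M S T.
Proof.
have [hST|neqST] := eqVneq #|S| #|T|; last first.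
  by rewrite (minor_card_neq _ neqST) minor_card_neq // eq_sym.
by rewrite (minorE _ erefl hST) (minorE _ hST erefl) -trmx_mxsub det_tr.
Qed.

Lemma minor_diag_mxl m n (M : 'M[R]_(m, n)) (S : {set 'I_m}) (T : {set 'I_n})
    (d : 'rV[R]_m) :
  minor (diag_mx d *m M) S T = (\prod_(x in S) d 0 x) * minor M S T.
Proof.
have [hTS|neqTS] := eqVneq #|T| #|S|; last by rewrite !minor_card_neq ?mulr0 // eq_sym.
rewrite !(minorE _ erefl hTS); set f := enum_cast _; set g := enum_cast _.
have -> : mxsub f g (diag_mx d *m M) = diag_mx (\row_a d 0 (f a)) *m mxsub f g M.
  by apply/matrixP => a b; rewrite !mul_diag_mx !mxE.
rewrite det_mulmx det_diag (big_enum_val (fun x => d 0 x)); congr (_ * _).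
by apply: eq_bigr => a _; rewrite mxE /f /enum_cast cast_ord_id.
Qed.

Lemma minor_diag_mxr m n (M : 'M[R]_(m, n)) (S : {set 'I_m}) (T : {set 'I_n})
    (d : 'rV[R]_n) :
  minor (M *m diag_mx d) S T = (\prod_(j in T) d 0 j) * minor M S T.
Proof. by rewrite -minor_tr trmx_mul tr_diag_mx minor_diag_mxl minor_tr. Qed.

End Minor.

Section Orthogonal.
Variable R : realType.

Lemma orthogonal_mx1 n : orthogonal_mx (1%:M : 'M[R]_n).
Proof. by rewrite /orthogonal_mx trmx1 mulmx1. Qed.

Lemma orthogonal_perm_mx n (σ : 'S_n) : orthogonal_mx (perm_mx σ : 'M[R]_n).
Proof. by rewrite /orthogonal_mx tr_perm_mx -perm_mxM mulVg perm_mx1. Qed.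

Definition sign_flip_mx n (j0 : 'I_n) : 'M[R]_n :=
  diag_mx (\row_j (if j == j0 then -1 else 1)).

Lemma orthogonal_sign_flip_mx n (j0 : 'I_n) : orthogonal_mx (sign_flip_mx j0).
Proof.
rewrite /orthogonal_mx tr_diag_mx mul_mx_diag; apply/matrixP => a b; rewrite !mxE.
have [<-|] := eqVneq a b; last by rewrite mul0r.
by case: (a == j0); rewrite ?mulrNN mulr1.
Qed.

Lemma prod_sign_flip n (A : {set 'I_n}) (j0 : 'I_n) :
  \prod_(j in A) (\row_j (if j == j0 then -1 else 1) : 'rV[R]_n) 0 j =
  if j0 \in A then -1 else 1.
Proof.
under eq_bigr do rewrite mxE.
case: ifPn => j0A; last first.
  by rewrite big1 // => j jA; case: eqP => // ej; rewrite -ej jA in j0A.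
by rewrite (bigD1 j0) //= eqxx big1 ?mulr1 // => j /andP[_ /negbTE ->].
Qed.

Lemma minor_sign_flipl m n (M : 'M[R]_(m, n)) (S : {set 'I_m}) (T : {set 'I_n}) x :
  minor (sign_flip_mx x *m M) S T = (if x \in S then -1 else 1) * minor M S T.
Proof. by rewrite minor_diag_mxl prod_sign_flip. Qed.

Lemma minor_sign_flipr m n (M : 'M[R]_(m, n)) (S : {set 'I_m}) (T : {set 'I_n}) y :
  minor (M *m sign_flip_mx y) S T = (if y \in T then -1 else 1) * minor M S T.
Proof. by rewrite minor_diag_mxr prod_sign_flip. Qed.

Lemma orthogonal_minor_mul_sign_change m n (S U : {set 'I_m}) (T V : {set 'I_n}) :
  (S != U) || (T != V) ->
  exists (O1 : 'M[R]_m) (O2 : 'M[R]_n),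
    [/\ orthogonal_mx O1, orthogonal_mx O2 & forall M : 'M[R]_(m, n),
      minor (O1 *m M *m O2) S T * minor (O1 *m M *m O2) U V =
      - (minor M S T * minor M U V)].
Proof.
have signN (b1 b2 : bool) (x y : R) : b1 != b2 ->
    (if b1 then -1 else 1) * x * ((if b2 then -1 else 1) * y) = - (x * y).
  by case: b1; case: b2 => // _; rewrite mulN1r mul1r ?mulNr ?mulrN.
have differ k (A B : {set 'I_k}) : A != B -> exists x, (x \in A) != (x \in B).
  move=> neqAB; apply/existsP; apply: contraNT neqAB => /existsPn eqAB.
  by apply/eqP/setP => x; apply/eqP/negPn/eqAB.
case/orP => [/differ [x Sx] | /differ [y Ty]].
  exists (sign_flip_mx x), 1%:M; split.
  - exact: orthogonal_sign_flip_mx.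
  - exact: orthogonal_mx1.
  - by move=> M; rewrite mulmx1 !minor_sign_flipl signN.
exists 1%:M, (sign_flip_mx y); split.
- exact: orthogonal_mx1.
- exact: orthogonal_sign_flip_mx.
- by move=> M; rewrite mul1mx !minor_sign_flipr signN.
Qed.

Lemma stiefel_mulmx s r (O1 : 'M[R]_s) (O2 : 'M[R]_r) (M : 'M[R]_(s, r)) :
  orthogonal_mx O1 -> orthogonal_mx O2 -> stiefel M -> stiefel (O1 *m M *m O2).
Proof.
rewrite /orthogonal_mx /stiefel /= => O1_orth O2_orth M_st.
by rewrite !trmx_mul -!mulmxA (mulmxA O1^T) O1_orth mul1mx (mulmxA M^T) M_st mul1mx.
Qed.

Lemma stiefel_colsub s r i (g : 'I_i -> 'I_r) (M : 'M[R]_(s, r)) :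
  injective g -> stiefel M -> stiefel (colsub g M).
Proof.
rewrite /stiefel /= => g_inj M_st; rewrite trmx_mxsub -mxsub_mul M_st.
by apply/matrixP => a b; rewrite !mxE (inj_eq g_inj).
Qed.

Lemma sum_det_rowsub_sqr_stiefel s i (A : 'M[R]_(s, i)) :
  stiefel A -> \sum_(f : {ffun 'I_i -> 'I_s}) \det (rowsub f A) ^+ 2 = i`!%:R.
Proof. by rewrite /stiefel /= => A_st; rewrite sum_det_rowsub_sqr A_st det1. Qed.

Lemma det_rowsub_sqr_le s i (A : 'M[R]_(s, i)) (f : 'I_i -> 'I_s) :
  stiefel A -> \det (rowsub f A) ^+ 2 <= i`!%:R.
Proof.
move=> A_st; rewrite -(sum_det_rowsub_sqr_stiefel A_st) (bigD1 (finfun f)) //=.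
rewrite (eq_rowsub _ (ffunE _)) lerDl; apply: sumr_ge0 => h _; exact: sqr_ge0.
Qed.

Lemma norm_minor_le s r (M : 'M[R]_(s, r)) (S : {set 'I_s}) (T : {set 'I_r}) :
  stiefel M -> `|minor M S T| <= (#|T|)`!%:R.
Proof.
have [hST M_st|neqST _] := eqVneq #|S| #|T|; last by rewrite minor_card_neq ?normr0.
have sqr_le : minor M S T ^+ 2 <= (#|T|)`!%:R.
  rewrite (minorE _ hST erefl) mxsubrc.
  exact/det_rowsub_sqr_le/stiefel_colsub/M_st/enum_cast_inj.
have one_le : 1 <= (#|T|)`!%:R :> R by rewrite ler1n fact_gt0.
have : `|minor M S T| ^+ 2 = minor M S T ^+ 2 by rewrite real_normK ?num_real.
have : 0 <= `|minor M S T| by [].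
nra.
Qed.

End Orthogonal.
Arguments sign_flip_mx {R n}.
Arguments orthogonal_mx1 {R n}.
Arguments orthogonal_perm_mx {R n}.

Local Open Scope classical_set_scope.

(* [g_sigma_algebraType] needs a pointed carrier, which matrices are not.  The
   measurable sets of [mx_borel R s r] are exactly those of [mx_measurable]. *)
Definition mx_pointed (R : realType) s r := 'M[R]_(s, r).
HB.instance Definition _ (R : realType) s r := Choice.on (mx_pointed R s r).
HB.instance Definition _ (R : realType) s r :=
  isPointed.Build (mx_pointed R s r) (0 : 'M[R]_(s, r)).

Definition mx_entry_preimages (R : realType) s r : set (set (mx_pointed R s r)) :=
  [set B | exists (i : 'I_s) (j : 'I_r) (C : set R),
     measurable C /\ B = (fun M : 'M[R]_(s, r) => M i j) @^-1` C].

Notation mx_borel R s r := (g_sigma_algebraType (@mx_entry_preimages R s r)).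

Section MatrixMeasurability.
Variable R : realType.

Lemma measurable_mx_entry s r (i : 'I_s) (j : 'I_r) :
  measurable_fun setT (fun M : mx_borel R s r => M i j).
Proof.
by move=> _ C mC; rewrite setTI; apply: sub_sigma_algebra; exists i, j, C.
Qed.

Lemma measurable_det d (X : measurableType d) n (F : X -> 'M[R]_n) :
  (forall a b, measurable_fun setT (fun x => F x a b)) ->
  measurable_fun setT (fun x => \det (F x)).
Proof.
move=> mF; apply: measurable_sum => σ; apply: measurable_funM => //.
by apply: measurable_prod => a _; exact: mF.
Qed.

Lemma measurable_mxsub_det s r i (f : 'I_i -> 'I_s) (g : 'I_i -> 'I_r) :
  measurable_fun setT (fun M : mx_borel R s r => \det (mxsub f g M)).
Proof.
apply: measurable_det => a b; under eq_fun do rewrite mxE.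
exact: measurable_mx_entry.
Qed.

Lemma measurable_minor s r (S : {set 'I_s}) (T : {set 'I_r}) :
  measurable_fun setT (fun M : mx_borel R s r => minor M S T).
Proof.
have [hST|neqST] := eqVneq #|S| #|T|; last first.
  by under eq_fun do rewrite minor_card_neq //; exact: measurable_cst.
by under eq_fun do rewrite (minorE _ hST erefl); exact: measurable_mxsub_det.
Qed.

Lemma measurable_mulmxlr s r (O1 : 'M[R]_s) (O2 : 'M[R]_r) :
  measurable_fun setT (fun M : mx_borel R s r => O1 *m M *m O2 : mx_borel R s r).
Proof.
apply: (@measurability _ _ (mx_borel R s r) (mx_borel R s r) setT _
  (@mx_entry_preimages R s r)) => // _ [_ [i [j [C [mC ->]]] <-]].
have entry_meas :
    measurable_fun setT (fun M : mx_borel R s r => (O1 *m M *m O2) i j).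
  under eq_fun do rewrite mxE; apply: measurable_sum => k.
  apply: measurable_funM => //; under eq_fun do rewrite mxE.
  apply: measurable_sum => l; apply: measurable_funM => //.
  exact: measurable_mx_entry.
by rewrite setTI; have := entry_meas measurableT C mC; rewrite setTI.
Qed.

End MatrixMeasurability.

Lemma integrable_bounded (R : realType) d (X : measurableType d)
    (P : probability X R) (g : X -> R) (K : R) :
  measurable_fun setT g -> (forall x, `|g x| <= K) -> P.-integrable setT (EFin \o g).
Proof.
move=> mg g_le; apply: measurable_bounded_integrable => //.
  by apply: (le_lt_trans (probability_le1 P measurableT)); exact: ltry.
exists K; split; first exact: num_real.
by move=> M KM x _ /=; rewrite (le_trans (g_le x)) // ltW.
Qed.

Section HaarStiefel.
Variables (R : realType) (d : measure_display) (Omega : measurableType d).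
Variables (P : probability Omega R) (s r : nat) (Q : Omega -> 'M[R]_(s, r)).
Hypothesis Q_haar : haar_stiefel P Q.

Let Q_stiefel w : stiefel (Q w).
Proof. by case: Q_haar. Qed.

Let measurable_Q : measurable_fun setT (Q : Omega -> mx_borel R s r).
Proof. by case: Q_haar => _ mQ _ _ A mA; rewrite setTI; exact: mQ. Qed.

Lemma expectation_haar_invariant (O1 : 'M[R]_s) (O2 : 'M[R]_r)
    (f : mx_borel R s r -> R) (K : R) :
  orthogonal_mx O1 -> orthogonal_mx O2 -> measurable_fun setT f ->
  (forall M, stiefel M -> `|f M| <= K) ->
  ('E_P[fun w => f (O1 *m Q w *m O2)] = 'E_P[fun w => f (Q w)])%E.
Proof.
move=> O1_orth O2_orth mf f_le.
have mfE : measurable_fun setT (EFin \o f) by exact/measurable_EFinP.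
have pushE (Y : Omega -> mx_borel R s r) : measurable_fun setT Y ->
    (forall w, stiefel (Y w)) ->
    ('E_P[fun w => f (Y w)] = \int[pushforward P Y]_(M in setT) (f M)%:E)%E.
  move=> mY Y_st; have intY : P.-integrable (Y @^-1` setT) ((EFin \o f) \o Y).
    rewrite preimage_setT; apply: (@integrable_bounded _ _ _ _ _ K) => [|w].
      exact: measurableT_comp.
    exact/f_le/Y_st.
  by rewrite unlock (integral_pushforward mY mfE intY) // preimage_setT.
have mY : measurable_fun setT (fun w => O1 *m Q w *m O2 : mx_borel R s r).
  exact: measurableT_comp (measurable_mulmxlr _ _) measurable_Q.
rewrite (pushE _ mY (fun w => stiefel_mulmx O1_orth O2_orth (Q_stiefel w))).
rewrite (pushE Q measurable_Q Q_stiefel); apply: eq_measure_integral => A mA _.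
by case: Q_haar => _ _ /(_ O1 O2 O1_orth O2_orth A mA).
Qed.

Lemma expectation_minor_mul_offdiag (S U : {set 'I_s}) (T V : {set 'I_r}) :
  (S != U) || (T != V) ->
  ('E_P[fun w => (minor (Q w) S T * minor (Q w) U V)%R] = 0)%E.
Proof.
move=> /(orthogonal_minor_mul_sign_change R)[A1 [A2 [A1_orth A2_orth FN]]].
pose F (M : mx_borel R s r) := minor M S T * minor M U V.
have mF : measurable_fun setT F by apply: measurable_funM; exact: measurable_minor.
pose K := (#|T|)`!%:R * (#|V|)`!%:R : R.
have F_le M : stiefel M -> `|F M| <= K.
  by move=> M_st; rewrite normrM ler_pM ?norm_minor_le.
have intF : P.-integrable setT (EFin \o (F \o Q)).
  apply: (@integrable_bounded _ _ _ _ _ K) => [|w].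
    exact: measurableT_comp mF measurable_Q.
  exact/F_le/Q_stiefel.
have := expectation_haar_invariant A1_orth A2_orth mF F_le.
under eq_fun do rewrite /F FN.
rewrite unlock; under eq_integral do rewrite EFinN.
rewrite integralN; last exact: integrable_add_def.
have := integrable_fin_num measurableT intF.
by case: (\int[P]_w _)%E => //= x _ [xN]; congr (_%:E); lra.
Qed.

Section SquaredMinors.
Variables (i : nat) (g : 'I_i -> 'I_r).
Hypothesis g_inj : injective g.

Let sqr_det (f : 'I_i -> 'I_s) (M : mx_borel R s r) := \det (mxsub f g M) ^+ 2.

Let sqr_det_le f M : stiefel M -> `|sqr_det f M| <= i`!%:R.
Proof.
move=> M_st; rewrite ger0_norm ?sqr_ge0 // /sqr_det mxsubrc.
exact/det_rowsub_sqr_le/stiefel_colsub.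
Qed.

Let measurable_sqr_det f : measurable_fun setT (sqr_det f).
Proof. by apply: measurable_funX; exact: measurable_mxsub_det. Qed.

Let E_sqr_det f := ('E_P[fun w => sqr_det f (Q w)])%E.

Let E_sqr_det_fin f : E_sqr_det f \is a fin_num.
Proof.
rewrite /E_sqr_det unlock; apply: (integrable_fin_num measurableT).
apply: (@integrable_bounded _ _ _ _ (fun w => sqr_det f (Q w)) i`!%:R) => [|w].
  exact: measurableT_comp (measurable_sqr_det f) measurable_Q.
exact/sqr_det_le/Q_stiefel.
Qed.

Let E_sqr_det_inj f f' : injective f -> injective f' -> E_sqr_det f = E_sqr_det f'.
Proof.
move=> f_inj f'_inj; have [σ σf'] := perm_extend_inj f_inj f'_inj.
rewrite /E_sqr_det -(expectation_haar_invariant (orthogonal_perm_mx σ)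
  orthogonal_mx1 (measurable_sqr_det f') (sqr_det_le f')).
congr ('E_P[_])%E; apply/funext => w; rewrite /sqr_det mulmx1 -row_permE.
by congr (\det _ ^+ 2); apply/matrixP => a b; rewrite !mxE σf'.
Qed.

Let E_sqr_det_noninj f : ~~ injectiveb f -> E_sqr_det f = 0%E.
Proof.
move=> f_ninj; rewrite /E_sqr_det (_ : (fun w => _) = cst 0) ?expectation_cst //.
by apply/funext => w; rewrite /sqr_det mxsubrc det_rowsub_noninj // expr0n.
Qed.

Let sum_E_sqr_det :
  (\sum_(f : {ffun 'I_i -> 'I_s}) E_sqr_det f = (i`!%:R)%:E)%E.
Proof.
rewrite /E_sqr_det expectation.unlock.
transitivity (\int[P]_w (\sum_(f : {ffun 'I_i -> 'I_s}) (sqr_det f (Q w))%:E))%E.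
  symmetry; apply: (@ge0_integral_sum _ _ _ P _ measurableT _
    (fun (f : {ffun 'I_i -> 'I_s}) w => (sqr_det f (Q w))%:E)) => [f|f w _].
    apply/measurable_EFinP.
    exact: measurableT_comp (measurable_sqr_det f) measurable_Q.
  by rewrite lee_fin sqr_ge0.
rewrite (eq_integral (fun=> (i`!%:R)%:E)); last first.
  move=> w _; rewrite sumEFin /sqr_det; under eq_bigr do rewrite mxsubrc.
  by rewrite sum_det_rowsub_sqr_stiefel //; exact: stiefel_colsub.
rewrite integral_cst // [X in (_ * X)%E](_ : _ = 1%E) ?mule1 //.
exact: probability_setT.
Qed.

Lemma expectation_sqr_det_mxsub (f : 'I_i -> 'I_s) : injective f ->
  ('E_P[fun w => (\det (mxsub f g (Q w)) ^+ 2)%R] = ('C(s, i)%:R^-1)%:E)%E.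
Proof.
move=> f_inj; have := sum_E_sqr_det.
rewrite (bigID (fun h : {ffun 'I_i -> 'I_s} => injectiveb h)) /=.
rewrite [X in (_ + X)%E]big1 => [|h /E_sqr_det_noninj //]; rewrite adde0.
rewrite (eq_bigr (fun=> E_sqr_det f)) => [|h /injectiveP h_inj]; last first.
  exact: E_sqr_det_inj.
rewrite sumr_const (_ : #|_| = s ^_ i); last first.
  have := card_inj_ffuns 'I_i 'I_s; rewrite !card_ord => <-.
  by apply: eq_card => h; rewrite inE.
move=> sum_Ef; have Ef_ffact : fine (E_sqr_det f) *+ s ^_ i = i`!%:R.
  by apply: EFin_inj; rewrite EFin_natmul fineK.
rewrite -[LHS]/(E_sqr_det f) -(fineK (E_sqr_det_fin f)); congr (_%:E).
have C_neq0 : 'C(s, i)%:R != 0 :> R.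
  by rewrite pnatr_eq0 -lt0n bin_gt0; have := leq_card _ f_inj; rewrite !card_ord.
have fact_neq0 : i`!%:R != 0 :> R by rewrite pnatr_eq0 -lt0n fact_gt0.
apply: (mulIf C_neq0); rewrite mulVf //; apply: (mulIf fact_neq0).
by rewrite mul1r -mulrA -natrM bin_ffact mulr_natr.
Qed.

End SquaredMinors.

Lemma expectation_minor_sqr (S : {set 'I_s}) (T : {set 'I_r}) i :
  #|S| = i -> #|T| = i ->
  ('E_P[fun w => (minor (Q w) S T * minor (Q w) S T)%R] = ('C(s, i)%:R^-1)%:E)%E.
Proof.
move=> hS hT; under eq_fun do rewrite -expr2 (minorE _ hS hT).
exact: (expectation_sqr_det_mxsub (enum_cast_inj hT) (enum_cast_inj hS)).
Qed.

End HaarStiefel.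

Theorem mainTheorem7 (R : realType) (d : measure_display) (Omega : measurableType d)
  (P : probability Omega R) (s r : nat) (Q : Omega -> 'M[R]_(s, r)) :
  (0 < r)%N -> (r <= s)%N -> haar_stiefel P Q ->
  forall (S U : {set 'I_s}) (T V : {set 'I_r}) (i l : nat),
    #|S| = i -> #|T| = i -> #|U| = l -> #|V| = l ->
    ('E_P[fun w => (minor (Q w) S T * minor (Q w) U V)%R]
     = ((('C(s, i))%:R)^-1 * (S == U)%:R * (T == V)%:R)%R%:E)%E.
Proof.
move=> _ _ Q_haar S U T V i l hS hT _ _.
have [neq|] := boolP ((S != U) || (T != V)).
  rewrite (expectation_minor_mul_offdiag Q_haar neq); congr (_%:E).
  by case/orP: neq => /negbTE ->; rewrite ?mulr0 ?mul0r.
rewrite negb_or !negbK => /andP[/eqP <- /eqP <-].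
by rewrite !eqxx !mulr1 (expectation_minor_sqr Q_haar hS hT).
Qed.
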